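(* Let $\theta$ be the formula $\mathrm{dep}(c)\wedge x\perp\!\!\!\perp y\wedge x\approx y\wedge((x=c\wedge y=c)\leftrightarrow z=c)$ and let $\phi(x)=\exists c\,\exists y\,\forall z\,\theta$. Let $\mathfrak A$ be a finite structure with domain $A$ of size $n$ and $\mathbb X$ a probabilistic team with variable domain $\{x\}$. If $\mathfrak A\models_{\mathbb X}\phi(x)$, then there is $a\in A$ with $|\mathbb X_{x=a}|=1/\sqrt n$.
   Context: Teams and probabilistic team semantics. A team $X$ is a finite set of assignments $s\colon D\to A$ for a finite set $D$ of first-order variables (its variable domain) and a finite set $A$. A probabilistic team is a function $\mathbb X\colon X\to[0,1]$ with $\sum_{s\in X}\mathbb X(s)=1$ (the empty function is also a probabilistic team). Write $\mathrm{supp}(\mathbb X)=\{s:\mathbb X(s)>0\}$, $|\mathbb X|=\sum_s\mathbb X(s)$, and for a first-order formula $\alpha$, $\mathbb X_\alpha$ is the restriction of $\mathbb X$ to assignments satisfying $\alpha$; e.g. $|\mathbb X_{\vec x=\vec a}|$ is the total weight of assignments mapping $\vec x$ to $\vec a$. Sums and scalar multiples of teams are pointwise. The marginal of $\mathbb X$ on a variable set $V$ is $s\mapsto\sum_{t\upharpoonright V=s}\mathbb X(t)$. For a variable $x$ and finite set $A$, $\mathbb X[A/x]$ is the team on all assignments $s$ over $\mathrm{Dom}(\mathbb X)\cup\{x\}$ with $s(x)\in A$ whose restriction to $\mathrm{Dom}(\mathbb X)\setminus\{x\}$ lies in the support of the marginal $\mathbb X'$ of $\mathbb X$ on $\mathrm{Dom}(\mathbb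 X)\setminus\{x\}$, given by $s\mapsto\mathbb X'(s\upharpoonright(\mathrm{Dom}(\mathbb X)\setminus\{x\}))/|A|$. Formulae are in negation normal form; for first-order $\alpha,\beta$, $\alpha^\bot$ is the negation normal form of $\neg\alpha$ and $\alpha\leftrightarrow\beta$ abbreviates $(\alpha\wedge\beta)\vee(\alpha^\bot\wedge\beta^\bot)$. For a $\tau$-structure $\mathfrak A$ with domain $A$: $\mathfrak A\models_{\mathbb X}l$ for a first-order literal $l$ iff $\mathfrak A\models_s l$ for all $s\in\mathrm{supp}(\mathbb X)$; $\mathfrak A\models_{\mathbb X}\psi\wedge\theta$ iff both hold; $\mathfrak A\models_{\mathbb X}\psi\vee\theta$ iff there are probabilistic teams $\mathbb Y,\mathbb Z$ and $\alpha\in[0,1]$ with $\alpha\mathbb Y+(1-\alpha)\mathbb Z=\mathbb X$, $\mathfrak A\models_{\mathbb Y}\psi$ and $\mathfrak A\models_{\mathbb Z}\theta$; $\mathfrak A\models_{\mathbb X}\forall x\psi$ iff $\mathfrak A\models_{\mathbb X[A/x]}\psi$; $\mathfrak A\models_{\mathbb X}\exists x\psi$ iff $\mathfrak A\models_{\mathbb Y}\psi$ for some probabilistic team $\mathbb Y$ over $\mathrm{Dom}(\mathbb X)\cup\{x\}$ with $x$-values in $A$ whose marginal on $\mathrm{Dom}(\mathbb X)\setminus\{x\}$ equals that of $\mathbb X$. Atoms. Marginal identity $\vec x\approx\vec y$ ($\vec x,\vec y$ of equal length $k$): $|\mathbb X_{\vec x=\vec a}|=|\mathbb X_{\vec y=\vec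 a}|$ for all $\vec a\in A^k$. Dependence $\mathrm{dep}(\vec x,y)$: all $s,s'\in\mathrm{supp}(\mathbb X)$ with $s(\vec x)=s'(\vec x)$ satisfy $s(y)=s'(y)$ (for empty $\vec x$, written $\mathrm{dep}(y)$: $y$ is constant on the support). Marginal independence $\vec y\perp\!\!\!\perp\vec z$: $|\mathbb X_{\vec y=\vec b}|\cdot|\mathbb X_{\vec z=\vec c}|=|\mathbb X_{\vec y\vec z=\vec b\vec c}|\cdot|\mathbb X|$ for all tuples $\vec b,\vec c$. *)

From mathcomp Require Import all_boot all_order all_algebra.
From mathcomp Require Import reals.
Set Implicit Arguments. Unset Strict Implicit. Unset Printing Implicit Defensive.
Import Order.TTheory GRing.Theory Num.Theory.
Local Open Scope ring_scope.

(* V : finite type of first-order variables, A : domain of the structure.  *)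
(* An assignment with variable domain D is encoded as a function           *)
(* V -> option A which is Some exactly on D.  A probabilistic team is a    *)
(* weight function on such assignments; assignments of weight 0 are        *)
(* irrelevant (the semantics only uses supports and sums), and the empty   *)
(* team is the constantly-0 function.                                      *)

Definition assign (V A : finType) := {ffun V -> option A}.

Section Semantics.
Variables (R : realType) (V A : finType).

Definition team := assign V A -> R.

Definition isPT (X : team) : Prop :=
  (forall s, 0 <= X s) /\ ((\sum_(s : assign V A) X s = 1) \/ (forall s, X s = 0)).

Definition tot (X : team) : R := \sum_(s : assign V A) X s.

Definition wt (X : team) (xs : seq V) (a : seq A) : R :=
  \sum_(s : assign V A | [seq s v | v <- xs] == [seq Some b | b <- a]) X s.

Definition restrict (x : V) (s : assign V A) : assign V A :=
  [ffun v => if v == x then None else s v].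

Definition marg (x : V) (X : team) (t : assign V A) : R :=
  \sum_(s : assign V A | restrict x s == t) X s.

Definition dupl (x : V) (X : team) : team :=
  fun s => if s x is Some _ then marg x X (restrict x s) / #|A|%:R else 0.

(* Formulae in negation normal form (empty vocabulary: only equality
   literals; the formula of the theorem uses no other symbols). *)
Inductive formula :=
| fEq  of V & V
| fNeq of V & V
| fMI  of seq V & seq V
| fDep of seq V & V
| fInd of seq V & seq V
| fAnd of formula & formula
| fOr  of formula & formula
| fEx  of V & formula
| fAll of V & formula.

Fixpoint sat (f : formula) (X : team) : Prop :=
  match f with
  | fEq u v => forall s, X s != 0 -> s u = s v
  | fNeq u v => forall s, X s != 0 -> s u != s v
  | fMI xs ys => forall a : seq A, size a = size xs -> wt X xs a = wt X ys a
  | fDep xs y => forall s s', X s != 0 -> X s' != 0 ->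
                   [seq s v | v <- xs] = [seq s' v | v <- xs] -> s y = s' y
  | fInd ys zs => forall b c : seq A, size b = size ys -> size c = size zs ->
                   wt X ys b * wt X zs c = wt X (ys ++ zs) (b ++ c) * tot X
  | fAnd f1 f2 => sat f1 X /\ sat f2 X
  | fOr f1 f2 => exists (Y Z : team) (al : R),
                   [/\ 0 <= al <= 1, isPT Y, isPT Z,
                       (forall s, X s = al * Y s + (1 - al) * Z s) &
                       (sat f1 Y /\ sat f2 Z)]
  | fEx x f1 => exists Y : team,
                   [/\ isPT Y, (forall s, Y s != 0 -> s x != None),
                       (forall t, marg x Y t = marg x X t) & sat f1 Y]
  | fAll x f1 => sat f1 (dupl x X)
  end.

(* negation normal form of the negation of a first-order formula
   (only applied to first-order formulae) *)
Fixpoint fneg (f : formula) : formula :=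
  match f with
  | fEq u v => fNeq u v
  | fNeq u v => fEq u v
  | fAnd f1 f2 => fOr (fneg f1) (fneg f2)
  | fOr f1 f2 => fAnd (fneg f1) (fneg f2)
  | fEx x f1 => fAll x (fneg f1)
  | fAll x f1 => fEx x (fneg f1)
  | g => g
  end.

Definition fIff (a b : formula) : formula :=
  fOr (fAnd a b) (fAnd (fneg a) (fneg b)).

Definition theta (x c y z : V) : formula :=
  fAnd (fDep [::] c)
   (fAnd (fInd [:: x] [:: y])
    (fAnd (fMI [:: x] [:: y])
          (fIff (fAnd (fEq x c) (fEq y c)) (fEq z c)))).

Definition phi (x c y z : V) : formula :=
  fEx c (fEx y (fAll z (theta x c y z))).

End Semantics.

From mathcomp Require Import all_boot all_order all_algebra.
From mathcomp Require Import reals.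
Set Implicit Arguments. Unset Strict Implicit. Unset Printing Implicit Defensive.
Import Order.TTheory GRing.Theory Num.Theory.
Local Open Scope ring_scope.

(* Unfold phi: X is extended by a team Y1 choosing c, then by
   Y2 choosing y, and T := Y2[A/z] satisfies theta.  Existential steps keep
   the marginal on the remaining variables, so |T_{x=a}| = |X_{x=a}| and
   |T| = 1, while the universal step makes z uniform: |T_{z=d}| = 1/n.
   In T, dep(c) makes c a constant d, and the quantifier-free biconditional
   holds pointwise on the support, so |T_{xy=dd}| = |T_{z=d}|.  Independence
   and marginal identity then give |T_{x=d}|^2 = |T_{xy=dd}| = 1/n. *)

Section TeamCalculus.
Variables (R : realType) (V A : finType).
Implicit Types (X Y : team R V A) (s t : assign V A).

Definition upd (v : V) t (o : option A) : assign V A :=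
  [ffun w => if w == v then o else t w].

Lemma restrict_upd v t o : t v = None -> restrict v (upd v t o) = t.
Proof. by move=> tv; apply/ffunP=> w; rewrite !ffunE; case: eqP => [->|]. Qed.

(* An assignment is determined by its value at v and its restriction. *)
Lemma sum_fiber_upd v t o (F : assign V A -> R) : t v = None ->
  \sum_(s : assign V A | (s v == o) && (restrict v s == t)) F s = F (upd v t o).
Proof.
move=> tv; rewrite (eq_bigl (pred1 (upd v t o))) ?big_pred1_eq // => s /=.
apply/idP/eqP => [/andP [/eqP so /eqP st]|->].
  by apply/ffunP=> w; rewrite !ffunE -st ffunE; case: eqP => [->|].
by rewrite restrict_upd // ffunE !eqxx.
Qed.

Lemma restrict_eq v s s' w : restrict v s = restrict v s' -> w != v -> s w = s' w.
Proof.
move=> e wv; have := congr1 (fun f : assign V A => f w) e.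
by rewrite !ffunE (negbTE wv).
Qed.

Lemma wt_marg v Y xs a : v \notin xs ->
  wt Y xs a = \sum_(t : assign V A) (if [seq t w | w <- xs] == [seq Some b | b <- a]
                      then marg v Y t else 0).
Proof.
move=> vx.
have restrictE s : [seq restrict v s w | w <- xs] = [seq s w | w <- xs].
  apply/eq_in_map=> w wx; rewrite ffunE; case: eqP => // ew.
  by move: vx; rewrite -ew wx.
rewrite /wt -big_mkcond /= (partition_big (restrict v)
   (fun t => [seq t w | w <- xs] == [seq Some b | b <- a])) /=; last first.
  by move=> s; rewrite restrictE.
apply: eq_bigr=> t ct; apply: eq_bigl=> s.
case: (restrict v s =P t)=> [e|]; last by rewrite andbF.
by rewrite -restrictE e ct.
Qed.

Lemma wt_margE v X Y xs a : v \notin xs ->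
  (forall t, marg v Y t = marg v X t) -> wt Y xs a = wt X xs a.
Proof.
by move=> vx m; rewrite !(wt_marg _ a vx); apply: eq_bigr=> t _; rewrite m.
Qed.

Lemma tot_margE v X Y : (forall t, marg v Y t = marg v X t) -> tot Y = tot X.
Proof.
move=> m; have nil_wt W : tot W = wt W [::] [::] by apply: eq_bigl.
by rewrite !nil_wt (wt_margE [::] _ m).
Qed.

Lemma sum_nz Y : \sum_(s : assign V A) Y s != 0 -> exists s, Y s != 0.
Proof.
move=> sumY; suff /existsP[s Ys] : [exists s, Y s != 0] by exists s.
apply: contraNT sumY => /existsPn noY; apply/eqP/big1 => s _.
exact/eqP/negbNE/noY.
Qed.

Lemma marg_nz v Y t : marg v Y t != 0 -> exists s, restrict v s = t /\ Y s != 0.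
Proof.
move=> Ht; suff /existsP[s /andP[/eqP st Ys]] :
    [exists s, (restrict v s == t) && (Y s != 0)] by exists s.
apply: contraNT Ht => /existsPn noY; apply/eqP/big1 => s st.
by apply/eqP; move: (noY s); rewrite st negbK.
Qed.

Lemma marg_pos v Y s : (forall s, 0 <= Y s) -> Y s != 0 ->
  marg v Y (restrict v s) != 0.
Proof.
move=> Y0 Ys; rewrite /marg (bigD1 s) //= gt_eqF // ltr_wpDr //.
  by apply: sumr_ge0=> i _; apply: Y0.
by rewrite lt_def Ys Y0.
Qed.

Lemma supp_margE v X Y s : (forall s, 0 <= Y s) ->
  (forall t, marg v Y t = marg v X t) -> Y s != 0 ->
  exists s', restrict v s' = restrict v s /\ X s' != 0.
Proof. by move=> Y0 m Ys; apply: marg_nz; rewrite -m marg_pos. Qed.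

Lemma dupl_nz z Y s : dupl z Y s != 0 -> marg z Y (restrict z s) != 0.
Proof.
by rewrite /dupl; case: (s z) => [b|]; rewrite ?eqxx // mulf_eq0 negb_or => /andP[].
Qed.

Lemma dupl_sum z Y s : dupl z Y s =
  \sum_(b : A) (if s z == Some b then marg z Y (restrict z s) / #|A|%:R else 0).
Proof.
rewrite /dupl -big_mkcond /=; case: (s z) => [b0|]; last by rewrite big_pred0.
by rewrite (eq_bigl (pred1 b0)) ?big_pred1_eq // => b; rewrite eq_sym.
Qed.

Lemma marg_dupl z Y t : (0 < #|A|)%N -> marg z (dupl z Y) t = marg z Y t.
Proof.
move=> nA; case tz: (t z) => [b|]; last first.
  rewrite {1}/marg; under eq_bigr do rewrite dupl_sum.
  rewrite exchange_big /=; under eq_bigr => b _.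
    rewrite -big_mkcondr /= (eq_bigl (fun s => (s z == Some b) && (restrict z s == t))).
      rewrite sum_fiber_upd // restrict_upd //; over.
    by move=> s; rewrite andbC.
  rewrite sumr_const -[_ *+ #|_|]/(_ *+ #|A|) -[X in X = _]mulr_natr.
  by rewrite divfK // pnatr_eq0 -lt0n.
have nt s : restrict z s == t = false.
  by apply/negbTE/eqP=> e; move: tz; rewrite -e ffunE eqxx.
by rewrite /marg !big_pred0.
Qed.

Lemma wt_dupl z Y d : wt (dupl z Y) [:: z] [:: d] = tot Y / #|A|%:R.
Proof.
rewrite /wt (eq_bigl (fun s => s z == Some d)); last by move=> s; rewrite /= eqseq_cons andbT.
rewrite (partition_big (restrict z) (fun t => t z == None)) /=; last first.
  by move=> s _; rewrite ffunE eqxx.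
have -> : tot Y = \sum_(t : assign V A | t z == None) marg z Y t.
  rewrite /tot (partition_big (restrict z) (fun t => t z == None)) //=.
  by move=> s _; rewrite ffunE eqxx.
rewrite mulr_suml; apply: eq_bigr=> t /eqP tz.
by rewrite sum_fiber_upd // /dupl ffunE eqxx restrict_upd.
Qed.

End TeamCalculus.

Section QuantifierFree.
Variables (R : realType) (V A : finType).
Implicit Types (X : team R V A) (s : assign V A) (f : formula V).

Fixpoint qf f : bool :=
  match f with
  | fEq _ _ | fNeq _ _ => true
  | fAnd f1 f2 | fOr f1 f2 => qf f1 && qf f2
  | _ => false
  end.

Fixpoint holds f s : bool :=
  match f with
  | fEq u v => s u == s v
  | fNeq u v => s u != s v
  | fAnd f1 f2 => holds f1 s && holds f2 s
  | fOr f1 f2 => holds f1 s || holds f2 s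
  | _ => true
  end.

(* Soundness of team semantics w.r.t. the pointwise reading: every point of
   the support satisfies a satisfied formula (a split of X covers its support). *)
Lemma sat_holds f X : sat f X -> forall s, X s != 0 -> holds f s.
Proof.
elim: f X => //= [u v|f1 IH1 f2 IH2|f1 IH1 f2 IH2] X.
- by move=> Heq s /Heq ->.
- by case=> H1 H2 s Xs; rewrite (IH1 _ H1 s Xs) (IH2 _ H2 s Xs).
case=> Y [Z [al [_ _ _ XE [H1 H2]]]] s Xs.
have [Y0|Ys] := eqVneq (Y s) 0; last by rewrite (IH1 _ H1 s Ys).
have [Z0|Zs] := eqVneq (Z s) 0; last by rewrite (IH2 _ H2 s Zs) orbT.
by move: Xs; rewrite XE Y0 Z0 !mulr0 addr0 eqxx.
Qed.

Lemma holds_fneg f s : qf f -> holds (fneg f) s = ~~ holds f s.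
Proof.
elim: f => //= [u v _|f1 IH1 f2 IH2 /andP[q1 q2]|f1 IH1 f2 IH2 /andP[q1 q2]].
- by rewrite negbK.
- by rewrite IH1 // IH2 // negb_and.
- by rewrite IH1 // IH2 // negb_or.
Qed.

Lemma sat_fIff a b X : qf a -> qf b -> sat (fIff a b) X ->
  forall s, X s != 0 -> holds a s = holds b s.
Proof.
move=> qa qb /sat_holds H s /H /=; rewrite !holds_fneg //.
by case: (holds a s); case: (holds b s).
Qed.

End QuantifierFree.

Lemma theta_wt_sqr (R : realType) (V A : finType) (x c y z : V)
    (T : team R V A) s0 d :
  tot T = 1 -> sat (theta x c y z) T -> T s0 != 0 -> s0 c = Some d ->
  wt T [:: x] [:: d] ^+ 2 = wt T [:: z] [:: d].
Proof.
move=> totT [dep_c [ind_xy [mi_xy iff_xyz]]] Ts0 s0c.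
have const_c s : T s != 0 -> s c = Some d.
  by move=> Ts; rewrite -s0c; apply: dep_c.
have pointwise s : T s != 0 ->
    ((s x == Some d) && (s y == Some d)) = (s z == Some d).
  move=> Ts; have qa : qf (fAnd (fEq x c) (fEq y c)) by [].
  have qb : qf (fEq z c) by [].
  have := sat_fIff qa qb iff_xyz Ts.
  by rewrite /= const_c.
have wt_xy : wt T [:: x; y] [:: d; d] = wt T [:: z] [:: d].
  rewrite /wt big_mkcond [RHS]big_mkcond; apply: eq_bigr => s _ /=.
  have [->|Ts] := eqVneq (T s) 0; first by rewrite !if_same.
  by rewrite !eqseq_cons !andbT pointwise.
have := ind_xy [:: d] [:: d] erefl erefl.
by rewrite /= totT mulr1 wt_xy -(mi_xy [:: d] erefl) expr2.
Qed.

Lemma sqr_eq_inv (F : rcfType) (w k : F) : 0 <= w -> 0 <= k ->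
  w ^+ 2 = k^-1 -> w = (Num.sqrt k)^-1.
Proof.
move=> w0 k0 wk; apply/eqP.
by rewrite -(eqrXn2 (n := 2)) // ?invr_ge0 ?sqrtr_ge0 // exprVn sqr_sqrtr // wk.
Qed.

Theorem mainTheorem17 (R : realType) (V A : finType) (x c y z : V)
  (X : team R V A) :
  uniq [:: x; c; y; z] ->
  isPT X ->
  (* X has variable domain {x} *)
  (forall s, X s != 0 -> forall v, (s v != None) = (v == x)) ->
  (* X is not the empty team *)
  \sum_s X s = 1 ->
  sat (phi x c y z) X ->
  exists a : A, wt X [:: x] [:: a] = (Num.sqrt (#|A|%:R : R))^-1.
Proof.
rewrite /= !inE !negb_or => /and4P[/and3P[xc xy xz] /andP[cy cz] _ _].
move=> [X0 _] domX sumX [Y1 [_ Y1c M1 [Y2 [[Y2_0 _] _ M2 thetaT]]]].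
set T := dupl z Y2.
have nA : (0 < #|A|)%N.
  have [s Xs] : exists s, X s != 0 by apply: sum_nz; rewrite sumX oner_eq0.
  have := domX s Xs x; rewrite eqxx.
  by case: (s x) => // b _; apply/card_gt0P; exists b.
have margT t : marg z T t = marg z Y2 t by apply: marg_dupl.
have wtT a : wt T [:: x] a = wt X [:: x] a.
  rewrite (wt_margE (v := z) (X := Y2)) ?inE 1?eq_sym //.
  rewrite (wt_margE (v := y) (X := Y1)) ?inE 1?eq_sym //.
  by rewrite (wt_margE (v := c) (X := X)) ?inE 1?eq_sym.
have totY2 : tot Y2 = 1 by rewrite (tot_margE M2) (tot_margE M1).
have totT : tot T = 1 by rewrite (tot_margE margT).
have [s0 Ts0] : exists s, T s != 0 by apply: sum_nz; rewrite -/(tot T) totT oner_eq0.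
have [d s0c] : exists d, s0 c = Some d.
  have [s1 [e1 Y2s1]] := marg_nz (dupl_nz Ts0).
  have [s2 [e2 Y1s2]] := supp_margE Y2_0 M2 Y2s1.
  move: (Y1c s2 Y1s2); rewrite (restrict_eq e2 cy) (restrict_eq e1 cz).
  by case: (s0 c) => [d _|]; [exists d|].
exists d; apply: sqr_eq_inv; rewrite ?ler0n ?sumr_ge0 //.
by rewrite -wtT (theta_wt_sqr totT thetaT Ts0 s0c) wt_dupl totY2 mul1r.
Qed.
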